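(* Let $N(n)=|\{w\in\mathcal{L}: |w|\le n\}|$ be the number of consistent outcome words of length at most $n$. Then there are constants $0<c_1\le c_2$ such that $c_1 n\le \log_2 N(n)\le c_2 n$ for all $n\ge 1$. In particular the number of binary hidden variables needed to determine all possible outcome sequences of length up to $n$ grows linearly in $n$, i.e. of the same order as $\log_2|\{w\in\tilde\Sigma^*:|w|\le n\}|$.
   Context: Let $\Sigma=\{A,B,C,a,b,c,\alpha,\beta,\gamma\}$ be nine observables arranged in a $3\times 3$ square with rows $(A,B,C)$, $(a,b,c)$, $(\alpha,\beta,\gamma)$. The six \emph{contexts} are the three rows $\{A,B,C\},\{a,b,c\},\{\alpha,\beta,\gamma\}$ and the three columns $\{A,a,\alpha\},\{B,b,\beta\},\{C,c,\gamma\}$. Each context has a sign: $-1$ for $\{C,c,\gamma\}$ and $+1$ for the other five. Two distinct observables are \emph{compatible} if they lie in a common context, and \emph{incompatible} otherwise. Let $\tilde\Sigma=\{X,\tilde X: X\in\Sigma\}$ (18 letters); the letter $X$ means ''observable $X$ measured with value $1$'' and $\tilde X$ means ''$X$ measured with value $-1$''. For a word $w=t_1\cdots t_m\in\tilde\Sigma^*$ define inductively partial assignments $v_0,\dots,v_m:\Sigma\rightharpoonup\{1,-1\}$ (an observable in $\mathrm{dom}(v_i)$ is \emph{determined} after step $i$, with value $v_i(X)$), and whether $w$ is consistent: $v_0$ is the empty assignment. Given $v_{i-1}$, let $t_i$ record observable $X$ with value $\varepsilon$. If $X\in\mathrm{dom}(v_{i-1})$ and $v_{i-1}(X)\ne\varepsilon$,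 then $w$ is \emph{inconsistent}. Otherwise let $u$ be the restriction of $v_{i-1}$ to observables that are equal to or compatible with $X$, extended by $u(X)=\varepsilon$; then $v_i$ is obtained from $u$ by repeatedly doing the following until nothing changes: whenever a context has exactly two of its observables in the domain, assign the third observable the value making the product of the three values equal to the sign of that context. The word $w$ is \emph{consistent} if no step is inconsistent; $\mathcal{L}$ is the set of consistent words (it contains the empty word). *)

From Stdlib Require Import Bool List Arith ZArith Reals.
Import ListNotations.

(** The nine observables of the 3x3 (Mermin-Peres) square:
    rows (A,B,C), (a,b,c), (alpha,beta,gamma). *)
Inductive obs : Set :=
  | oA | oB | oC | oa | ob | oc | oal | obe | oga.

Scheme Equality for obs.

Definition all_obs : list obs := [oA; oB; oC; oa; ob; oc; oal; obe; oga].

Definition contexts : list (obs * obs * obs * Z) :=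
  [ (oA, oB, oC, 1%Z); (oa, ob, oc, 1%Z); (oal, obe, oga, 1%Z);
    (oA, oa, oal, 1%Z); (oB, ob, obe, 1%Z); (oC, oc, oga, (-1)%Z) ].

Definition in_ctx (X : obs) (k : obs * obs * obs * Z) : bool :=
  let '(x, y, z, _) := k in obs_beq X x || obs_beq X y || obs_beq X z.

Definition compatible (X Y : obs) : bool :=
  negb (obs_beq X Y) &&
  existsb (fun k => in_ctx X k && in_ctx Y k) contexts.

(** Letters of the 18-letter alphabet: [Plus X] is "X measured with value 1",
    [Minus X] is "X measured with value -1" (the letter X-tilde). *)
Inductive letter : Set :=
  | Plus : obs -> letter
  | Minus : obs -> letter.

Definition all_letters : list letter := map Plus all_obs ++ map Minus all_obs.

Definition letter_obs (t : letter) : obs :=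
  match t with Plus X => X | Minus X => X end.
Definition letter_val (t : letter) : Z :=
  match t with Plus _ => 1%Z | Minus _ => (-1)%Z end.

(** Partial assignments Sigma -> {1,-1}; [None] = undetermined. *)
Definition assignment := obs -> option Z.

Definition empty_asg : assignment := fun _ => None.

Definition update (v : assignment) (X : obs) (e : Z) : assignment :=
  fun Y => if obs_beq Y X then Some e else v Y.

(** One propagation step: find the first context having exactly two of its
    observables determined and assign the third the value making the product
    equal to the sign of the context (third = sign * a * b since a,b = +-1). *)
Definition fire (v : assignment) (k : obs * obs * obs * Z) : option (obs * Z) :=
  let '(x, y, z, s) := k in
  match v x, v y, v z with
  | Some a, Some b, None => Some (z, (s * a * b)%Z)
  | Some a, None, Some c => Some (y, (s * a * c)%Z)
  | None, Some b, Some c => Some (x, (s * b * c)%Z)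
  | _, _, _ => None
  end.

Fixpoint first_fire (v : assignment) (ks : list (obs * obs * obs * Z))
  : option (obs * Z) :=
  match ks with
  | [] => None
  | k :: ks' => match fire v k with
                | Some r => Some r
                | None => first_fire v ks'
                end
  end.

Definition prop_step (v : assignment) : assignment :=
  match first_fire v contexts with
  | Some (X, e) => update v X e
  | None => v
  end.

(** Each effective step determines one more observable, so after 9 steps
    nothing changes any more: this is the closure ("repeat until nothing
    changes"). *)
Definition closure (v : assignment) : assignment := Nat.iter 9 prop_step v.

Definition step (v : assignment) (t : letter) : option assignment :=
  let X := letter_obs t in
  let e := letter_val t in
  match v X with
  | Some e' => if Z.eqb e' e then
                 Some (closure (update (fun Y => if obs_beq Y X || compatible X Y
                                                 then v Y else None) X e))
               else None
  | None => Some (closure (update (fun Y => if obs_beq Y X || compatible X Y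
                                            then v Y else None) X e))
  end.

Fixpoint run_from (v : assignment) (w : list letter) : option assignment :=
  match w with
  | [] => Some v
  | t :: w' => match step v t with
               | Some v' => run_from v' w'
               | None => None
               end
  end.

Definition consistent (w : list letter) : bool :=
  match run_from empty_asg w with Some _ => true | None => false end.

Fixpoint words (k : nat) : list (list letter) :=
  match k with
  | O => [[]]
  | S k' => flat_map (fun t => map (cons t) (words k')) all_letters
  end.

Definition Ncons (n : nat) : nat :=
  fold_right plus 0 (map (fun k => length (filter consistent (words k))) (seq 0 (S n))).

Definition log2R (x : R) : R := (ln x / ln 2)%R.

Example ex1 : consistent [Plus oA; Plus oB; Minus oC] = false. Proof. reflexivity. Qed.
Example ex2 : consistent [Plus oA; Plus oB; Plus oC; Minus oA] = false. Proof. reflexivity. Qed.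
Example ex3 : consistent [Plus oA; Plus oB; Plus ob; Minus oA] = true. Proof. reflexivity. Qed.
Example ex4 : Ncons 1 = 19%nat /\ Ncons 0 = 1%nat. Proof. split; vm_compute; reflexivity. Qed.

From Stdlib Require Import Reals.
From Stdlib Require Import List Lia Lra FunctionalExtensionality.
Import ListNotations.
Open Scope R_scope.

(** Proof strategy.  Count, for a state [v], the words of length [k] that can
    be run from [v] without contradiction; [Ncons n] is the sum of these counts
    for the empty state over [k <= n].

    Upper bound: a count is at most the number [18^k] of all words, and
    [sum_(k<=n) 18^k <= 19^n].

    Lower bound: the observables [A] and [b] share no context.  Measuring one
    of them in a state where only the other (or nothing) is determined erases
    everything and leaves just the measured value, and both outcomes are
    allowed.  Alternating [A] and [b] with free outcomes therefore gives a
    binary branching of consistent words, whence at least [2^n] consistent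
    words of length [n] (a general "branching lemma").

    Taking [log2] of [2^n <= Ncons n <= 19^n] gives the theorem with
    [c1 = 1] and [c2 = log2 19]. *)

Definition runs_from (v : assignment) (w : list letter) : bool :=
  match run_from v w with Some _ => true | None => false end.

Definition count_from (v : assignment) (k : nat) : nat :=
  length (filter (runs_from v) (words k)).

Lemma words_S (k : nat) :
  words (S k) = flat_map (fun t => map (cons t) (words k)) all_letters.
Proof. reflexivity. Qed.

Lemma length_words (k : nat) : length (words k) = (18 ^ k)%nat.
Proof.
  induction k as [|k IH]; [reflexivity|].
  rewrite words_S, length_flat_map.
  erewrite map_ext by (intro; now rewrite length_map).
  rewrite IH. reflexivity.
Qed.

Definition count_after (v : assignment) (k : nat) (t : letter) : nat :=
  match step v t with Some v' => count_from v' k | None => 0%nat end.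

Lemma count_after_spec (v : assignment) (k : nat) (t : letter) :
  length (filter (runs_from v) (map (cons t) (words k))) = count_after v k t.
Proof.
  unfold count_after, count_from.
  induction (words k) as [|w W IH]; simpl; [now destruct (step v t)|].
  unfold runs_from at 1; simpl.
  destruct (step v t) as [v'|]; simpl in *; [|exact IH].
  fold (runs_from v' w); destruct (runs_from v' w); simpl; auto.
Qed.

Lemma count_from_S (v : assignment) (k : nat) :
  count_from v (S k) = list_sum (map (count_after v k) all_letters).
Proof.
  unfold count_from at 1. rewrite words_S.
  induction all_letters as [|t L IH]; [reflexivity|].
  simpl. rewrite filter_app, length_app, IH.
  fold (count_from v k). now rewrite count_after_spec.
Qed.

Lemma term_le_list_sum {A : Type} (f : A -> nat) (x : A) (l : list A) :
  In x l -> (f x <= list_sum (map f l))%nat.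
Proof.
  induction l as [|y l IH]; simpl; [easy|].
  intros [<-|Hx]; [lia|]. specialize (IH Hx). lia.
Qed.

Lemma Ncons_count (n : nat) :
  Ncons n = list_sum (map (count_from empty_asg) (seq 0 (S n))).
Proof. reflexivity. Qed.

Lemma cumulated_pow_bound (a : nat) (g : nat -> nat) (n : nat) :
  (forall k, g k <= a ^ k)%nat ->
  (list_sum (map g (seq 0 (S n))) <= (S a) ^ n)%nat.
Proof.
  intros Hg. induction n as [|n IH].
  - specialize (Hg 0%nat). simpl in *. lia.
  - rewrite seq_S, map_app, list_sum_app. simpl.
    specialize (Hg (S n)).
    assert (a ^ S n <= a * S a ^ n)%nat
      by (apply Nat.mul_le_mono_l, Nat.pow_le_mono_l; lia).
    simpl in *. lia.
Qed.

Lemma Ncons_upper (n : nat) : (Ncons n <= 19 ^ n)%nat.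
Proof.
  rewrite Ncons_count. apply cumulated_pow_bound.
  intro k. rewrite <- length_words. apply filter_length_le.
Qed.

Lemma branching_lower_bound (P : assignment -> Prop) :
  (forall v, P v -> exists X v1 v2,
     step v (Plus X) = Some v1 /\ P v1 /\ step v (Minus X) = Some v2 /\ P v2) ->
  forall k v, P v -> (2 ^ k <= count_from v k)%nat.
Proof.
  intros Hbranch k. induction k as [|k IH]; intros v Hv; [exact (le_n 1)|].
  destruct (Hbranch v Hv) as (X & v1 & v2 & H1 & P1 & H2 & P2).
  assert (E1 : count_after v k (Plus X) = count_from v1 k)
    by (unfold count_after; now rewrite H1).
  assert (E2 : count_after v k (Minus X) = count_from v2 k)
    by (unfold count_after; now rewrite H2).
  assert (HP : (count_after v k (Plus X) <= list_sum (map (count_after v k) (map Plus all_obs)))%nat)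
    by (apply term_le_list_sum, in_map; destruct X; simpl; tauto).
  assert (HM : (count_after v k (Minus X) <= list_sum (map (count_after v k) (map Minus all_obs)))%nat)
    by (apply term_le_list_sum, in_map; destruct X; simpl; tauto).
  rewrite count_from_S. unfold all_letters. rewrite map_app, list_sum_app.
  pose proof (IH v1 P1); pose proof (IH v2 P2). rewrite Nat.pow_succ_r'. lia.
Qed.

Definition only (X : obs) (e : Z) : assignment := update empty_asg X e.

Lemma closure_only (X : obs) (e : Z) : closure (only X e) = only X e.
Proof. destruct X; reflexivity. Qed.

Lemma step_forgets (v : assignment) (t : letter) :
  (forall Y, v Y <> None -> Y <> letter_obs t /\ compatible (letter_obs t) Y = false) ->
  step v t = Some (only (letter_obs t) (letter_val t)).
Proof.
  intros Hinc.
  assert (HX : v (letter_obs t) = None)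
    by (destruct (v (letter_obs t)) eqn:E; [|easy];
        destruct (Hinc (letter_obs t)) as [? _]; congruence).
  assert (Hrestr : (fun Y => if (obs_beq Y (letter_obs t) || compatible (letter_obs t) Y)%bool
                            then v Y else None) = empty_asg).
  { apply functional_extensionality; intros Y; unfold empty_asg.
    destruct (obs_beq Y (letter_obs t)) eqn:EY; simpl.
    - apply internal_obs_dec_bl in EY. now subst.
    - destruct (compatible (letter_obs t) Y) eqn:EC; [|reflexivity].
      destruct (v Y) eqn:EV; [|reflexivity].
      destruct (Hinc Y) as [_ Hc]; congruence. }
  unfold step. rewrite HX, Hrestr. now rewrite closure_only.
Qed.

Lemma step_from_empty (t : letter) :
  step empty_asg t = Some (only (letter_obs t) (letter_val t)).
Proof. apply step_forgets. now intros Y HY. Qed.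

Lemma step_from_only (Y : obs) (e : Z) (t : letter) :
  letter_obs t <> Y -> compatible (letter_obs t) Y = false ->
  step (only Y e) t = Some (only (letter_obs t) (letter_val t)).
Proof.
  intros Hne Hc. apply step_forgets. intros Y' HY'.
  unfold only, update, empty_asg in HY'.
  destruct (obs_beq Y' Y) eqn:EZ; [|easy].
  apply internal_obs_dec_bl in EZ. subst. auto.
Qed.

(** States reached by alternately measuring [A] and [b]; these two
    observables are distinct and lie in no common context. *)
Definition alternating (v : assignment) : Prop :=
  v = empty_asg \/ exists e, v = only oA e \/ v = only ob e.

Lemma alternating_branches (v : assignment) : alternating v ->
  exists X v1 v2, step v (Plus X) = Some v1 /\ alternating v1 /\
                  step v (Minus X) = Some v2 /\ alternating v2.
Proof.
  intros [-> | [e [-> | ->]]].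
  - exists oA, (only oA 1), (only oA (-1)).
    rewrite !step_from_empty. repeat split; right; eauto.
  - exists ob, (only ob 1), (only ob (-1)).
    rewrite !step_from_only by easy. repeat split; right; eauto.
  - exists oA, (only oA 1), (only oA (-1)).
    rewrite !step_from_only by easy. repeat split; right; eauto.
Qed.

Lemma Ncons_lower (n : nat) : (2 ^ n <= Ncons n)%nat.
Proof.
  rewrite Ncons_count.
  eapply Nat.le_trans.
  - apply (branching_lower_bound alternating alternating_branches n empty_asg).
    now left.
  - apply term_le_list_sum. apply in_seq. lia.
Qed.

Lemma log2R_pow_bounds (a b N : R) (n : nat) :
  0 < a -> 0 < b -> a ^ n <= N <= b ^ n ->
  INR n * log2R a <= log2R N <= INR n * log2R b.
Proof.
  intros Ha Hb [Hlo Hhi].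
  assert (Hl2 : 0 < ln 2) by (rewrite <- ln_1; apply ln_increasing; lra).
  assert (Han : 0 < a ^ n) by (apply pow_lt; lra).
  assert (Hln_mono : forall x y, 0 < x -> x <= y -> ln x <= ln y)
    by (intros x y Hx [Hxy | <-]; [left; apply ln_increasing|]; lra).
  unfold log2R.
  replace (INR n * (ln a / ln 2)) with (ln (a ^ n) / ln 2)
    by (rewrite ln_pow by lra; field; lra).
  replace (INR n * (ln b / ln 2)) with (ln (b ^ n) / ln 2)
    by (rewrite ln_pow by lra; field; lra).
  assert (Hinv : 0 <= / ln 2) by (left; apply Rinv_0_lt_compat, Hl2).
  split; apply Rmult_le_compat_r; auto; apply Hln_mono; lra.
Qed.

Theorem mainTheorem6 :
  exists c1 c2 : R, 0 < c1 /\ c1 <= c2 /\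
    forall n : nat, (1 <= n)%nat ->
      c1 * INR n <= log2R (INR (Ncons n)) <= c2 * INR n.
Proof.
  assert (Hlog2 : log2R 2 = 1)
    by (unfold log2R; field; rewrite <- ln_1; apply Rgt_not_eq, ln_increasing; lra).
  assert (Hlog19 : 1 <= log2R 19).
  { rewrite <- Hlog2. unfold log2R. apply Rmult_le_compat_r.
    - left. apply Rinv_0_lt_compat. rewrite <- ln_1. apply ln_increasing; lra.
    - left. apply ln_increasing; lra. }
  exists 1, (log2R 19). split; [lra|]. split; [exact Hlog19|].
  intros n _.
  assert (Hbounds : 2 ^ n <= INR (Ncons n) <= 19 ^ n).
  { pose proof (le_INR _ _ (Ncons_lower n)) as Hlo.
    pose proof (le_INR _ _ (Ncons_upper n)) as Hhi.
    rewrite pow_INR in Hlo, Hhi.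
    replace (INR 2) with 2 in Hlo by (simpl; lra).
    replace (INR 19) with 19 in Hhi by (simpl; lra).
    lra. }
  pose proof (log2R_pow_bounds 2 19 _ n ltac:(lra) ltac:(lra) Hbounds) as Hlog.
  rewrite Hlog2 in Hlog. lra.
Qed.
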